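(* Let $\rho>0$ be irrational and let $\Gamma_\rho\subset SL_2(\mathbb R)$ be the group generated by $\begin{pmatrix}1&1\\0&1\end{pmatrix}$ and $\begin{pmatrix}1&0\\\rho&1\end{pmatrix}$. Let $\left(\frac{p_n}{q_n}\right)_n$ be the sequence of continued fraction convergents of $\rho+1$. Then there is a constant $C>0$ (depending on $\rho$) such that for every $n$ there exist two distinct points $z_1,z_2$ of the orbit $\Gamma_\rho\binom{1}{0}$ with $\|z_1-z_2\|\le \frac{C}{q_{n+1}}$ and $\|z_1\|,\|z_2\|\le C\,q_nq_{n+1}$.
   Context: $\|\cdot\|$ is the Euclidean norm on $\mathbb R^2$; the group acts on $\mathbb R^2$ by matrix multiplication on column vectors. The convergents $p_n/q_n$ are the standard continued fraction convergents (in lowest terms, $q_n>0$). *)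

From Stdlib Require Import Reals ZArith.
Open Scope R_scope.

Definition irrational (x : R) : Prop :=
  forall (p q : Z), q <> 0%Z -> x <> IZR p / IZR q.

Record Mat2 := mkMat2 { m11 : R; m12 : R; m21 : R; m22 : R }.

Definition mat_mul (A B : Mat2) : Mat2 :=
  mkMat2 (m11 A * m11 B + m12 A * m21 B) (m11 A * m12 B + m12 A * m22 B)
         (m21 A * m11 B + m22 A * m21 B) (m21 A * m12 B + m22 A * m22 B).

Definition mat_id : Mat2 := mkMat2 1 0 0 1.

Definition mat_app (A : Mat2) (v : R * R) : R * R :=
  (m11 A * fst v + m12 A * snd v, m21 A * fst v + m22 A * snd v).

Definition genT : Mat2 := mkMat2 1 1 0 1.
Definition genTinv : Mat2 := mkMat2 1 (-1) 0 1.
Definition genS (rho : R) : Mat2 := mkMat2 1 0 rho 1.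
Definition genSinv (rho : R) : Mat2 := mkMat2 1 0 (- rho) 1.

Inductive in_Gamma (rho : R) : Mat2 -> Prop :=
| Gamma_id : in_Gamma rho mat_id
| Gamma_T : forall g, in_Gamma rho g -> in_Gamma rho (mat_mul genT g)
| Gamma_Tinv : forall g, in_Gamma rho g -> in_Gamma rho (mat_mul genTinv g)
| Gamma_S : forall g, in_Gamma rho g -> in_Gamma rho (mat_mul (genS rho) g)
| Gamma_Sinv : forall g, in_Gamma rho g -> in_Gamma rho (mat_mul (genSinv rho) g).

Definition in_orbit (rho : R) (z : R * R) : Prop :=
  exists g, in_Gamma rho g /\ z = mat_app g (1, 0).

Definition norm2 (v : R * R) : R := sqrt (fst v ^ 2 + snd v ^ 2).
Definition vsub (v w : R * R) : R * R := (fst v - fst w, snd v - snd w).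

(** Continued fraction expansion: x_0 = x, x_{k+1} = 1/(x_k - floor x_k),
    a_k = floor x_k  (Int_part is the floor function). *)
Fixpoint cf_x (x : R) (k : nat) : R :=
  match k with
  | O => x
  | S k => / (cf_x x k - IZR (Int_part (cf_x x k)))
  end.
Definition cf_a (x : R) (k : nat) : Z := Int_part (cf_x x k).

(** ((p_n, q_n), (p_{n-1}, q_{n-1})) with p_{-1} = 1, q_{-1} = 0,
    p_0 = a_0, q_0 = 1, p_n = a_n p_{n-1} + p_{n-2}, same for q. *)
Fixpoint cf_pq (x : R) (n : nat) : (Z * Z) * (Z * Z) :=
  match n with
  | O => ((cf_a x 0, 1%Z), (1%Z, 0%Z))
  | S m =>
      let '((p, q), (p', q')) := cf_pq x m in
      let a := cf_a x (S m) in
      (((a * p + p')%Z, (a * q + q')%Z), (p, q))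
  end.
Definition cf_p (x : R) (n : nat) : Z := fst (fst (cf_pq x n)).
Definition cf_q (x : R) (n : nat) : Z := snd (fst (cf_pq x n)).

(* Put x = rho + 1 and d = |q_n x - p_n|.  The continued fraction identity
   d (q_n x_{n+1} + q_{n-1}) = 1 gives 1/(2 q_{n+1}) <= d <= 1/q_{n+1}, and
   (m, l) = +-(p_n, q_n) satisfies m - l x = d for a suitable sign.  With
   k = floor(1/d), the orbit points T^k S^(m+1) e1 and T^k S^l T S e1 differ by
   rho (k d - 1, d), of norm at most 2 rho d, while their norms are
   O(k q_n) = O(q_n q_{n+1}). *)

From Stdlib Require Import Reals ZArith Lra Lia Psatz.
Open Scope R_scope.

Lemma in_orbit_e1 rho : in_orbit rho (1, 0).
Proof. exists mat_id; split; [constructor | unfold mat_app, mat_id; simpl; f_equal; ring]. Qed.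

Lemma in_orbit_mat_app rho A v :
  (forall g, in_Gamma rho g -> in_Gamma rho (mat_mul A g)) ->
  in_orbit rho v -> in_orbit rho (mat_app A v).
Proof.
  intros HA [g [Hg ->]]; exists (mat_mul A g); split; [now apply HA |].
  unfold mat_app, mat_mul; simpl; f_equal; ring.
Qed.

Lemma in_orbit_shearT rho k a b :
  in_orbit rho (a, b) -> in_orbit rho (a + IZR k * b, b).
Proof.
  intro H; induction k as [| k IH | k IH] using Z.peano_ind.
  - now rewrite Rmult_0_l, Rplus_0_r.
  - replace (a + IZR (Z.succ k) * b, b) with (mat_app genT (a + IZR k * b, b))
      by (unfold mat_app, genT; simpl; rewrite succ_IZR; f_equal; ring).
    exact (in_orbit_mat_app _ _ _ (Gamma_T rho) IH).
  - replace (a + IZR (Z.pred k) * b, b) with (mat_app genTinv (a + IZR k * b, b))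
      by (unfold mat_app, genTinv; simpl; rewrite <- Z.sub_1_r, minus_IZR; f_equal; ring).
    exact (in_orbit_mat_app _ _ _ (Gamma_Tinv rho) IH).
Qed.

Lemma in_orbit_shearS rho k a b :
  in_orbit rho (a, b) -> in_orbit rho (a, b + IZR k * rho * a).
Proof.
  intro H; induction k as [| k IH | k IH] using Z.peano_ind.
  - now rewrite !Rmult_0_l, Rplus_0_r.
  - replace (a, b + IZR (Z.succ k) * rho * a) with (mat_app (genS rho) (a, b + IZR k * rho * a))
      by (unfold mat_app, genS; simpl; rewrite succ_IZR; f_equal; ring).
    exact (in_orbit_mat_app _ _ _ (Gamma_S rho) IH).
  - replace (a, b + IZR (Z.pred k) * rho * a) with (mat_app (genSinv rho) (a, b + IZR k * rho * a))
      by (unfold mat_app, genSinv; simpl; rewrite <- Z.sub_1_r, minus_IZR; f_equal; ring).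
    exact (in_orbit_mat_app _ _ _ (Gamma_Sinv rho) IH).
Qed.

(* [shearTS rho k m v] is T^k S^m v, with T = genT and S = genS rho. *)
Definition shearTS (rho : R) (k m : Z) (v : R * R) : R * R :=
  let b := snd v + IZR m * rho * fst v in (fst v + IZR k * b, b).

Lemma in_orbit_shearTS rho k m v : in_orbit rho v -> in_orbit rho (shearTS rho k m v).
Proof.
  destruct v as [a b]; intro H.
  exact (in_orbit_shearT rho k _ _ (in_orbit_shearS rho m a b H)).
Qed.

Lemma norm2_le_abs_add a b : norm2 (a, b) <= Rabs a + Rabs b.
Proof.
  unfold norm2; simpl.
  rewrite <- (sqrt_Rsqr (Rabs a + Rabs b)) by (pose proof (Rabs_pos a); pose proof (Rabs_pos b); lra).
  apply sqrt_le_1_alt; unfold Rsqr; simpl.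
  pose proof (Rsqr_abs a); pose proof (Rsqr_abs b); unfold Rsqr in *.
  pose proof (Rabs_pos a); pose proof (Rabs_pos b); nra.
Qed.

Lemma norm2_shearTS_le rho k m v : 0 <= IZR k ->
  norm2 (shearTS rho k m v) <= Rabs (fst v) + (IZR k + 1) * Rabs (snd v + IZR m * rho * fst v).
Proof.
  intro Hk; unfold shearTS; eapply Rle_trans; [apply norm2_le_abs_add |].
  pose proof (Rabs_triang (fst v) (IZR k * (snd v + IZR m * rho * fst v))).
  rewrite Rabs_mult, (Rabs_pos_eq (IZR k) Hk) in H; lra.
Qed.

Lemma shearTS_sub rho k m l :
  let d := IZR m - IZR l * (rho + 1) in
  vsub (shearTS rho k (m + 1) (1, 0)) (shearTS rho k l (rho + 1, rho))
  = (rho * (IZR k * d - 1), rho * d).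
Proof. unfold vsub, shearTS; simpl; rewrite plus_IZR; f_equal; ring. Qed.

Lemma irrational_add_int x z : irrational x -> irrational (x + IZR z).
Proof.
  intros Hx p q Hq E; apply (Hx (p - z * q)%Z q Hq).
  assert (IZR q <> 0) by now apply not_0_IZR.
  rewrite minus_IZR, mult_IZR.
  replace x with (x + IZR z - IZR z) by ring; rewrite E; field; auto.
Qed.

Lemma irrational_frac_part_bounds y : irrational y -> 0 < frac_part y < 1.
Proof.
  intro Hy; unfold frac_part; destruct (base_Int_part y) as [[Hlt | Heq] Hgt]; [lra |].
  exfalso; apply (Hy (Int_part y) 1%Z); [lia |]; rewrite Heq; field.
Qed.

Lemma irrational_inv_frac_part y : irrational y -> irrational (/ frac_part y).
Proof.
  intros Hy p q Hq E.
  pose proof (irrational_frac_part_bounds y Hy) as Hf.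
  assert (Hq' : IZR q <> 0) by now apply not_0_IZR.
  assert (Hp : IZR p <> 0).
  { intro Hp; rewrite Hp in E; unfold Rdiv in E; rewrite Rmult_0_l in E.
    pose proof (Rinv_0_lt_compat _ (proj1 Hf)); lra. }
  apply (Hy (Int_part y * p + q)%Z p); [intros ->; apply Hp; reflexivity |].
  rewrite plus_IZR, mult_IZR, (Rplus_Int_part_frac_part y) at 1.
  rewrite <- (Rinv_inv (frac_part y)), E; field; auto.
Qed.

Lemma irrational_cf_x x k : irrational x -> irrational (cf_x x k).
Proof. intro Hx; induction k; [exact Hx | exact (irrational_inv_frac_part _ IHk)]. Qed.

Lemma cf_x_succ_gt1 x k : irrational x -> 1 < cf_x x (S k).
Proof.
  intro Hx; change (1 < / frac_part (cf_x x k)).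
  pose proof (irrational_frac_part_bounds _ (irrational_cf_x x k Hx)) as Hf.
  rewrite <- Rinv_1; apply Rinv_lt_contravar; lra.
Qed.

Lemma cf_a_succ_ge1 x k : irrational x -> (1 <= cf_a x (S k))%Z.
Proof.
  intro Hx; unfold cf_a; pose proof (cf_x_succ_gt1 x k Hx).
  destruct (base_Int_part (cf_x x (S k))).
  enough (0 < Int_part (cf_x x (S k)))%Z by lia.
  apply lt_IZR; lra.
Qed.

Lemma cf_pq_invariant x n : irrational x ->
  let '((p, q), (p', q')) := cf_pq x n in
  (1 <= q)%Z /\ (0 <= q' <= q)%Z /\
  IZR q' * x - IZR p' = - cf_x x (S n) * (IZR q * x - IZR p) /\
  (q * p' - q' * p = 1 \/ q * p' - q' * p = -1)%Z.
Proof.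
  intro Hx; induction n as [| n IH].
  - pose proof (irrational_frac_part_bounds x Hx) as Hf; unfold frac_part in Hf.
    simpl; unfold cf_a; simpl; repeat split; try lia.
    field; lra.
  - cbn [cf_pq]; destruct (cf_pq x n) as [[p q] [p' q']].
    destruct IH as (Hq & Hq' & Herr & Hdet).
    pose proof (cf_a_succ_ge1 x n Hx) as Ha.
    pose proof (irrational_frac_part_bounds _ (irrational_cf_x x (S n) Hx)) as Hf.
    change (cf_x x (S (S n))) with (/ frac_part (cf_x x (S n))).
    unfold frac_part, cf_a in *.
    set (y := cf_x x (S n)) in *; set (a := Int_part y) in *.
    repeat split; try nia.
    rewrite !plus_IZR, !mult_IZR.
    field_simplify_eq; [nra | lra].
Qed.

Lemma cf_q_bounds x n : irrational x -> (1 <= cf_q x n <= cf_q x (S n))%Z.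
Proof.
  intro Hx; pose proof (cf_pq_invariant x n Hx) as Hinv.
  pose proof (cf_a_succ_ge1 x n Hx).
  unfold cf_q; cbn [cf_pq]; destruct (cf_pq x n) as [[p q] [p' q']]; simpl; nia.
Qed.

Lemma cf_approx_error x n : irrational x ->
  let d := Rabs (IZR (cf_q x n) * x - IZR (cf_p x n)) in
  0 < d /\ d * IZR (cf_q x (S n)) <= 1 <= 2 * (d * IZR (cf_q x (S n))).
Proof.
  intro Hx; pose proof (cf_pq_invariant x n Hx) as Hinv.
  pose proof (cf_a_succ_ge1 x n Hx) as Ha.
  unfold cf_q, cf_p; cbn [cf_pq]; destruct (cf_pq x n) as [[p q] [p' q']]; simpl.
  destruct Hinv as (Hq & Hq' & Herr & Hdet).
  unfold cf_a in *; set (y := cf_x x (S n)) in *; set (a := Int_part y) in *.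
  destruct (base_Int_part y) as [Hay Hya]; fold a in Hay, Hya.
  set (D := IZR q * x - IZR p) in *.
  set (M := IZR q * y + IZR q').
  assert (HDM : D * M = IZR (q * p' - q' * p)).
  { transitivity (IZR q * (y * D) + IZR q' * D); [unfold M; ring |].
    replace (y * D) with (IZR p' - IZR q' * x) by lra.
    rewrite minus_IZR, !mult_IZR; unfold D; ring. }
  assert (HqR : 1 <= IZR q) by (apply IZR_le; lia).
  assert (Hq'R : 0 <= IZR q' <= IZR q) by (split; apply IZR_le; lia).
  assert (HaR : 1 <= IZR a) by (apply IZR_le; lia).
  assert (HM : 0 < M) by (unfold M; nra).
  assert (Hd : Rabs D * M = 1).
  { rewrite <- (Rabs_pos_eq M) by lra; rewrite <- Rabs_mult, HDM.
    destruct Hdet as [-> | ->]; [apply Rabs_R1 | rewrite Rabs_left; lra]. }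
  rewrite plus_IZR, mult_IZR.
  assert (IZR a * IZR q + IZR q' <= M <= 2 * (IZR a * IZR q + IZR q')) by (unfold M; nra).
  pose proof (Rabs_pos D); nra.
Qed.

Lemma Int_part_inv_bounds d : 0 < d ->
  let k := Int_part (/ d) in 0 <= IZR k /\ IZR k * d <= 1 < (IZR k + 1) * d.
Proof.
  intros Hd k; pose proof (Rinv_0_lt_compat d Hd) as Hd'.
  destruct (base_Int_part (/ d)) as [Hle Hgt]; fold k in Hle, Hgt.
  assert (Hk : (0 <= k)%Z) by (enough (-1 < k)%Z by lia; apply lt_IZR; lra).
  split; [now apply IZR_le |].
  assert (Hlt : / d < IZR k + 1) by lra.
  apply (Rmult_le_compat_r d) in Hle; apply (Rmult_lt_compat_r d) in Hlt; try lra.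
  rewrite Rinv_l in Hle, Hlt by lra; lra.
Qed.

Lemma norm2_shearTS_e1_le rho k m : 0 < rho -> 0 <= IZR k ->
  norm2 (shearTS rho k m (1, 0)) <= 1 + (IZR k + 1) * (Rabs (IZR m) * rho).
Proof.
  intros Hrho Hk; eapply Rle_trans; [apply norm2_shearTS_le, Hk |]; simpl.
  rewrite Rabs_R1, Rplus_0_l, Rmult_1_r, Rabs_mult, (Rabs_pos_eq rho) by lra; lra.
Qed.

Lemma norm2_shearTS_TSe1_le rho k l : 0 < rho -> 0 <= IZR k ->
  norm2 (shearTS rho k l (rho + 1, rho))
  <= rho + 1 + (IZR k + 1) * (rho * (1 + Rabs (IZR l) * (rho + 1))).
Proof.
  intros Hrho Hk; eapply Rle_trans; [apply norm2_shearTS_le, Hk |]; simpl.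
  rewrite (Rabs_pos_eq (rho + 1)) by lra.
  apply Rplus_le_compat_l, Rmult_le_compat_l; [lra |].
  eapply Rle_trans; [apply Rabs_triang |].
  rewrite !Rabs_mult, (Rabs_pos_eq rho), (Rabs_pos_eq (rho + 1)) by lra; nra.
Qed.

Definition orbit_const (rho : R) : R := 3 * (rho + 3) ^ 2.

Lemma orbit_near_pair_signed rho m l Q : 0 < rho -> 1 <= Rabs (IZR l) <= Q ->
  let d := IZR m - IZR l * (rho + 1) in
  0 < d -> d * Q <= 1 <= 2 * (d * Q) ->
  exists z1 z2 : R * R,
    in_orbit rho z1 /\ in_orbit rho z2 /\ z1 <> z2 /\
    norm2 (vsub z1 z2) <= orbit_const rho / Q /\
    norm2 z1 <= orbit_const rho * Rabs (IZR l) * Q /\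
    norm2 z2 <= orbit_const rho * Rabs (IZR l) * Q.
Proof.
  intros Hrho Hn d Hd [HdQ HQd].
  destruct (Int_part_inv_bounds d Hd) as (Hk0 & Hkd & Hdk).
  set (k := Int_part (/ d)) in *; set (N := Rabs (IZR l)) in *.
  assert (HkQ : IZR k + 1 <= 3 * Q) by nra.
  assert (HNQ : 1 <= N * Q) by nra.
  pose proof (shearTS_sub rho k m l) as Hsub; fold d in Hsub.
  exists (shearTS rho k (m + 1) (1, 0)), (shearTS rho k l (rho + 1, rho)).
  split; [| split; [| split; [| split; [| split]]]].
  - exact (in_orbit_shearTS _ _ _ _ (in_orbit_e1 rho)).
  - replace (rho + 1, rho) with (shearTS rho 1 1 (1, 0))
      by (unfold shearTS; simpl; f_equal; ring).
    exact (in_orbit_shearTS _ _ _ _ (in_orbit_shearTS _ _ _ _ (in_orbit_e1 rho))).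
  - intro E; rewrite E in Hsub; unfold vsub in Hsub.
    injection Hsub as _ H0; nra.
  - rewrite Hsub; eapply Rle_trans; [apply norm2_le_abs_add |].
    rewrite !Rabs_mult, (Rabs_pos_eq rho), (Rabs_pos_eq d), (Rabs_left1 (_ - 1)) by lra.
    apply Rle_trans with (2 * rho * d); [nra |].
    apply (Rmult_le_reg_r Q); [lra |].
    replace (orbit_const rho / Q * Q) with (orbit_const rho) by (field; lra).
    unfold orbit_const; nra.
  - eapply Rle_trans; [apply norm2_shearTS_e1_le; lra |].
    assert (Hm : Rabs (IZR (m + 1)) <= N * (rho + 3)).
    { replace (IZR (m + 1)) with (d + 1 + IZR l * (rho + 1)) by (rewrite plus_IZR; unfold d; ring).
      eapply Rle_trans; [apply Rabs_triang |].
      rewrite Rabs_mult, (Rabs_pos_eq (rho + 1)), Rabs_pos_eq by lra; fold N; nra. }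
    assert (0 <= Rabs (IZR (m + 1)) * rho) by (apply Rmult_le_pos; [apply Rabs_pos | lra]).
    apply Rle_trans with (1 + 3 * Q * (N * (rho + 3) * rho)).
    + apply Rplus_le_compat_l, Rmult_le_compat; nra.
    + unfold orbit_const; nra.
  - eapply Rle_trans; [apply norm2_shearTS_TSe1_le; lra |]; fold N.
    apply Rle_trans with (rho + 1 + 3 * Q * (N * rho * (rho + 2))).
    + apply Rplus_le_compat_l, Rmult_le_compat; nra.
    + apply Rle_trans with ((rho + 1 + 3 * rho * (rho + 2)) * (N * Q)); unfold orbit_const; nra.
Qed.

Lemma orbit_near_pair rho p q Q : 0 < rho -> 1 <= IZR q <= Q ->
  let d := Rabs (IZR q * (rho + 1) - IZR p) in
  0 < d -> d * Q <= 1 <= 2 * (d * Q) ->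
  exists z1 z2 : R * R,
    in_orbit rho z1 /\ in_orbit rho z2 /\ z1 <> z2 /\
    norm2 (vsub z1 z2) <= orbit_const rho / Q /\
    norm2 z1 <= orbit_const rho * IZR q * Q /\
    norm2 z2 <= orbit_const rho * IZR q * Q.
Proof.
  intros Hrho Hq d Hd HdQ; unfold d in *.
  destruct (Rlt_or_le (IZR q * (rho + 1) - IZR p) 0) as [Hneg | Hnonneg].
  - rewrite Rabs_left in Hd, HdQ by lra.
    rewrite <- (Rabs_pos_eq (IZR q)) by lra.
    apply (orbit_near_pair_signed rho p q Q); rewrite ?Rabs_pos_eq; lra.
  - rewrite Rabs_pos_eq in Hd, HdQ by lra.
    rewrite <- (Rabs_pos_eq (IZR q)), <- Rabs_Ropp, <- opp_IZR by lra.
    apply (orbit_near_pair_signed rho (- p) (- q) Q); rewrite ?opp_IZR, ?Rabs_Ropp, ?Rabs_pos_eq by lra; lra.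
Qed.

Theorem proposition1p4 (rho : R) (hrho : 0 < rho) (hirr : irrational rho) :
  exists C : R, 0 < C /\
    forall n : nat,
      exists z1 z2 : R * R,
        in_orbit rho z1 /\ in_orbit rho z2 /\ z1 <> z2 /\
        norm2 (vsub z1 z2) <= C / IZR (cf_q (rho + 1) (S n)) /\
        norm2 z1 <= C * IZR (cf_q (rho + 1) n) * IZR (cf_q (rho + 1) (S n)) /\
        norm2 z2 <= C * IZR (cf_q (rho + 1) n) * IZR (cf_q (rho + 1) (S n)).
Proof.
  assert (Hx : irrational (rho + 1)) by exact (irrational_add_int rho 1 hirr).
  exists (orbit_const rho); split; [unfold orbit_const; nra |].
  intro n.
  destruct (cf_q_bounds (rho + 1) n Hx) as [Hq1 HqQ].
  destruct (cf_approx_error (rho + 1) n Hx) as [Hd HdQ].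
  apply (orbit_near_pair rho (cf_p (rho + 1) n)); auto.
  split; apply IZR_le; lia.
Qed.
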